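(* Let $(V_1,\dots,V_n)$ be an $n$-tuple of doubly non-commuting isometries on $H$. (1) Let $A\ne B$ be subsets of $\{1,\dots,n\}$ and let $L_A,L_B$ be subspaces reducing all $V_1,\dots,V_n$ such that $V_i|_{L_A}$ is a pure isometry for $i\in A$ and unitary for $i\in A^c$, and $V_i|_{L_B}$ is a pure isometry for $i\in B$ and unitary for $i\in B^c$. Then $L_A\perp L_B$. (2) Suppose that for each $A\subseteq\{1,\dots,n\}$, $L_A$ is a subspace reducing all $V_1,\dots,V_n$ such that $V_i|_{L_A}$ is a pure isometry for $i\in A$ and unitary for $i\in A^c$. If $H=\bigoplus_{A}L_A$ algebraically, then $L_A=H_A$ for all $A$.
   Context: Fix $n\ge1$ and $z_{ij}\in\mathbb T$ ($i\ne j$) with $z_{ji}=\overline{z_{ij}}$; $(V_1,\dots,V_n)$ is doubly non-commuting if the $V_i$ are isometries with $V_i^*V_j=\overline{z_{ij}}V_jV_i^*$ for $i\ne j$. Subspaces are closed; $A^c$ is the complement in $\{1,\dots,n\}$. For an isometry $S$ and an $S$-invariant subspace $L$, $S|_L$ is a pure isometry if $\{0\}$ is the only $S$-invariant subspace of $L$ on which $S$ is unitary. $H^{\mathrm{iso}}(S)=\bigoplus_{k\ge0}S^k(\ker S^* )$, $H^{\mathrm{uni}}(S)=\bigcap_{k\ge0}S^k(H)$, and $H_A=\bigcap_{i\in A}H^{\mathrm{iso}}(V_i)\cap\bigcap_{i\in A^c}H^{\mathrm{uni}}(V_i)$ (empty intersection $=H$). *)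

From HB Require Import structures.
From mathcomp Require Import all_boot all_order all_algebra.
From mathcomp Require Import complex.
From mathcomp Require Export reals.
Set Implicit Arguments. Unset Strict Implicit. Unset Printing Implicit Defensive.
Import Order.TTheory GRing.Theory Num.Theory.
Local Open Scope ring_scope.

Section Hilbert.
Variables (R : realType) (H : lmodType R[i]) (ip : H -> H -> R[i]).

Definition hnorm (x : H) : R := Num.sqrt (complex.Re (ip x x)).

Definition hconverges (u : nat -> H) (x : H) : Prop :=
  forall e : R, 0 < e -> exists N, forall m, (N <= m)%N -> hnorm (u m - x) < e.

Definition hcauchy (u : nat -> H) : Prop :=
  forall e : R, 0 < e -> exists N, forall m k, (N <= m)%N -> (N <= k)%N ->
    hnorm (u m - u k) < e.

Definition is_hilbert : Prop :=
  [/\ forall (a : R[i]) (x y z : H), ip (a *: x + y) z = a * ip x z + ip y z,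
      forall x y : H, ip y x = (ip x y)^*,
      forall x : H, 0 <= ip x x,
      forall x : H, ip x x = 0 -> x = 0
    & forall u : nat -> H, hcauchy u -> exists x, hconverges u x].

Definition closed_subspace (L : H -> Prop) : Prop :=
  [/\ L 0,
      forall (a : R[i]) (x y : H), L x -> L y -> L (a *: x + y)
    & forall (u : nat -> H) (x : H), (forall m, L (u m)) -> hconverges u x -> L x].

Definition is_linear (T : H -> H) : Prop :=
  forall (a : R[i]) (x y : H), T (a *: x + y) = a *: T x + T y.

Definition is_adjoint (T Ts : H -> H) : Prop :=
  forall x y : H, ip (T x) y = ip x (Ts y).

Definition reduces (L : H -> Prop) (T Ts : H -> H) : Prop :=
  (forall x, L x -> L (T x)) /\ (forall x, L x -> L (Ts x)).

(* the restriction of the isometry T to the invariant subspace L is unitary *)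
Definition unitary_on (T : H -> H) (L : H -> Prop) : Prop :=
  forall y, L y -> exists x, L x /\ T x = y.

Definition pure_on (T : H -> H) (L : H -> Prop) : Prop :=
  forall M : H -> Prop, closed_subspace M -> (forall x, M x -> L x) ->
    (forall x, M x -> M (T x)) -> unitary_on T M -> forall x, M x -> x = 0.

Definition closed_span (G : H -> Prop) (x : H) : Prop :=
  forall M : H -> Prop, closed_subspace M -> (forall y, G y -> M y) -> M x.

Definition Hiso (S Ss : H -> H) : H -> Prop :=
  closed_span (fun y => exists k w, Ss w = 0 /\ y = iter k S w).

Definition Huni (S : H -> H) (x : H) : Prop :=
  forall k, exists y, x = iter k S y.

Definition HA (n : nat) (V Vs : 'I_n -> H -> H) (A : {set 'I_n}) (x : H) : Prop :=
  (forall i, i \in A -> Hiso (V i) (Vs i) x) /\ (forall i, i \notin A -> Huni (V i) x).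

Definition typeA (n : nat) (V Vs : 'I_n -> H -> H) (A : {set 'I_n}) (L : H -> Prop) : Prop :=
  [/\ closed_subspace L,
      forall i, reduces L (V i) (Vs i),
      forall i, i \in A -> pure_on (V i) L
    & forall i, i \notin A -> unitary_on (V i) L].

End Hilbert.

Definition doubly_noncommuting (R : realType) (H : lmodType R[i]) (ip : H -> H -> R[i])
  (n : nat) (z : 'I_n -> 'I_n -> R[i]) (V Vs : 'I_n -> H -> H) : Prop :=
  [/\ (forall i j, i != j -> `|z i j| = 1) /\
        (forall i j, i != j -> z j i = (z i j)^* ),
      forall i, is_linear (V i),
      forall i, is_adjoint ip (V i) (Vs i),
      forall i x, Vs i (V i x) = x
    & forall i j, i != j -> forall x, Vs i (V j x) = (z i j)^* *: V j (Vs i x)].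

From HB Require Import structures.
From mathcomp Require Import all_boot all_order all_algebra.
From mathcomp Require Import complex.
From mathcomp Require Import classical_sets lra ring.
Set Implicit Arguments.
Unset Strict Implicit.
Unset Printing Implicit Defensive.
Import Order.TTheory GRing.Theory Num.Theory.
Local Open Scope ring_scope.

(* For an isometry T with adjoint T', the operators P_k := T^k T'^k are the
   orthogonal projections onto T^k H.  They decrease, so P_k x converges, and the
   limit is fixed by every P_k, i.e. lies in the part of a reducing subspace L on
   which T is unitary.  If T is pure on L this limit is 0, so every x in L is the
   limit of x - P_k x, a sum of vectors of the wandering subspaces T^j (ker T'):
   L lies in H^iso(T).  A subspace on which T is unitary lies in H^uni(T), and
   H^iso(T) is orthogonal to H^uni(T).  Hence each L_A lies in H_A, and H_A is
   orthogonal to H_B for A <> B (some V_i is of iso type on one side and of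
   unitary type on the other), which gives (1).  For (2), write x in H_A as a sum
   of f_B in L_B; for B <> A, 0 = <x, f_B> = |f_B|^2 by orthogonality, so
   x = f_A. *)

Lemma nonincreasing_cauchy (R : realType) (a : nat -> R) :
  (forall k m, (k <= m)%N -> a m <= a k) -> (forall k, 0 <= a k) ->
  forall e, 0 < e -> exists N, forall m, (N <= m)%N -> a N - a m < e.
Proof.
move=> a_decr a_ge0 e e_gt0.
set E : set R := fun x => exists k, x = - a k.
have supE : has_sup E.
  split; first by exists (- a 0%N), 0%N.
  by exists 0 => _ [k ->]; rewrite oppr_le0.
have [_ [N ->] aN] := sup_adherent e_gt0 supE.
exists N => m _.
have : - a m <= sup E by apply: sup_upper_bound => //; exists m.
by move: aN; lra.
Qed.

Lemma set_neq_witness (T : finType) (A B : {set T}) :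
  A != B -> exists x, (x \in A) != (x \in B).
Proof.
move=> AB; apply/existsP; apply: contraR AB; rewrite negb_exists => /forallP AB.
by apply/eqP/setP => x; apply/eqP/negbNE/AB.
Qed.

Lemma ge0_complexE (R : realType) (c : R[i]) : 0 <= c -> c = (complex.Re c)%:C%C.
Proof. by case: c => a b; rewrite lecE /= => /andP[/eqP -> _]. Qed.

Section LinearMap.
Variables (R : realType) (H : lmodType R[i]) (f : H -> H).
Hypothesis f_linear : is_linear f.

Lemma is_linear0 : f 0 = 0.
Proof.
have := f_linear 1 0 0; rewrite scale1r !addr0 scale1r => f00.
by apply: (@addrI _ (f 0)); rewrite addr0 -f00.
Qed.

Lemma is_linearB x y : f (x - y) = f x - f y.
Proof. by rewrite addrC -scaleN1r f_linear scaleN1r addrC. Qed.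

Lemma is_linear_iter k : is_linear (iter k f).
Proof. by elim: k => [//|k IHk] a x y; rewrite /= IHk f_linear. Qed.

End LinearMap.

Section InnerProduct.
Variables (R : realType) (H : lmodType R[i]) (ip : H -> H -> R[i]).
Hypothesis ipD : forall (a : R[i]) (x y z : H), ip (a *: x + y) z = a * ip x z + ip y z.
Hypothesis ipC : forall x y : H, ip y x = (ip x y)^*.
Hypothesis ip_ge0 : forall x : H, 0 <= ip x x.
Hypothesis ip_eq0 : forall x : H, ip x x = 0 -> x = 0.

Lemma ipDl x y z : ip (x + y) z = ip x z + ip y z.
Proof. by have := ipD 1 x y z; rewrite scale1r mul1r. Qed.

Lemma ip0l z : ip 0 z = 0.
Proof. by apply: (@addrI _ (ip 0 z)); rewrite -ipDl !addr0. Qed.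

Lemma ipZl a x z : ip (a *: x) z = a * ip x z.
Proof. by rewrite -[a *: x]addr0 ipD ip0l addr0. Qed.

Lemma ipBl x y z : ip (x - y) z = ip x z - ip y z.
Proof. by rewrite ipDl -scaleN1r ipZl mulN1r. Qed.

Lemma ipDr x y z : ip z (x + y) = ip z x + ip z y.
Proof. by rewrite ipC [ip z x]ipC [ip z y]ipC ipDl rmorphD. Qed.

Lemma ip0r z : ip z 0 = 0.
Proof. by rewrite ipC ip0l conjC0. Qed.

Lemma ipZr a x z : ip z (a *: x) = a^* * ip z x.
Proof. by rewrite ipC [ip z x]ipC ipZl rmorphM. Qed.

Lemma ipBr x y z : ip z (x - y) = ip z x - ip z y.
Proof. by rewrite ipC [ip z x]ipC [ip z y]ipC ipBl rmorphB. Qed.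

Lemma ip_suml (I : finType) (f : I -> H) z :
  ip (\sum_(i : I) f i) z = \sum_(i : I) ip (f i) z.
Proof. exact: (big_morph (ip^~ z) (fun u v => ipDl u v z) (ip0l z)). Qed.

Lemma ipC_eq0 x y : ip x y = 0 -> ip y x = 0.
Proof. by move=> xy0; rewrite ipC xy0 conjC0. Qed.

Lemma ip_ext u v : (forall w, ip w u = ip w v) -> u = v.
Proof.
by move=> uv; apply/eqP; rewrite -subr_eq0; apply/eqP/ip_eq0; rewrite ipBr uv subrr.
Qed.

Definition sqnorm x := complex.Re (ip x x).

Lemma ip_sqnorm x : ip x x = (sqnorm x)%:C%C.
Proof. exact: ge0_complexE. Qed.

Lemma sqnorm_ge0 x : 0 <= sqnorm x.
Proof. by rewrite -ler0c -ip_sqnorm. Qed.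

Lemma sqnorm_eq0 x : sqnorm x = 0 -> x = 0.
Proof. by move=> x0; apply: ip_eq0; rewrite ip_sqnorm x0. Qed.

Lemma sqnormB x y : sqnorm (x - y) = sqnorm (y - x).
Proof. by rewrite /sqnorm !ipBl !ipBr; congr (complex.Re _); ring. Qed.

Lemma sqnormD_le x y : sqnorm (x + y) <= 2 * sqnorm x + 2 * sqnorm y.
Proof.
have parallelogram : ip (x + y) (x + y) + ip (x - y) (x - y) = 2 * ip x x + 2 * ip y y.
  by rewrite !ipBl !ipBr !ipDl !ipDr; ring.
move: parallelogram; rewrite !ip_sqnorm -(rmorph_nat (real_complex R) 2).
rewrite -!rmorphM -!rmorphD => /complexI.
by have := sqnorm_ge0 (x - y); lra.
Qed.

Lemma cauchy_schwarz x y : `|ip x y| ^+ 2 <= (sqnorm x * sqnorm y)%:C%C.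
Proof.
have [->|y_neq0] := eqVneq y 0.
  by rewrite ip0r normr0 expr0n /sqnorm ip0l mulr0.
set Y := (sqnorm y)%:C%C.
have Y_gt0 : 0 < Y.
  by rewrite /Y -ip_sqnorm lt0r ip_ge0 andbT; apply: contra y_neq0 => /eqP/ip_eq0 ->.
have Y_real : Y^* = Y by rewrite conj_Creal // ger0_real // ltW.
set c := ip x y; set s := c / Y.
have : 0 <= ip (x - s *: y) (x - s *: y) by [].
have -> : ip (x - s *: y) (x - s *: y) = (sqnorm x)%:C%C - c * c^* / Y.
  rewrite !ipBl !ipBr !ipZl !ipZr [ip y x]ipC -/c !ip_sqnorm -/Y.
  rewrite /s rmorphM /= fmorphV /= Y_real.
  by field; rewrite gt_eqF.
by rewrite subr_ge0 -normCK ler_pdivrMr // rmorphM.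
Qed.

Definition sqconverges (u : nat -> H) (x : H) :=
  forall e : R, 0 < e -> exists N, forall m, (N <= m)%N -> sqnorm (u m - x) < e.

Definition sqcauchy (u : nat -> H) :=
  forall e : R, 0 < e -> exists N, forall m k, (N <= m)%N -> (N <= k)%N ->
    sqnorm (u m - u k) < e.

Lemma hnorm_lt x e : 0 < e -> (hnorm ip x < e) = (sqnorm x < e ^+ 2).
Proof.
by move=> e_gt0; rewrite -[sqnorm x < _]ltr_sqrt ?exprn_gt0 // sqrtr_sqr ger0_norm ?ltW.
Qed.

Lemma hconvergesE u x : hconverges ip u x <-> sqconverges u x.
Proof.
split=> ux e e_gt0.
  have [|N uN] := ux (Num.sqrt e); first by rewrite sqrtr_gt0.
  by exists N => m /uN; rewrite hnorm_lt ?sqrtr_gt0 // sqr_sqrtr // ltW.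
have [|N uN] := ux (e ^+ 2); first by rewrite exprn_gt0.
by exists N => m /uN; rewrite hnorm_lt.
Qed.

Lemma sqcauchy_hcauchy u : sqcauchy u -> hcauchy ip u.
Proof.
move=> u_cauchy e e_gt0; have [|N uN] := u_cauchy (e ^+ 2); first by rewrite exprn_gt0.
by exists N => m k /uN um /um; rewrite hnorm_lt.
Qed.

Lemma sqconverges_uniq u p q : sqconverges u p -> sqconverges u q -> p = q.
Proof.
move=> up uq; apply/eqP; rewrite -subr_eq0; apply/eqP/sqnorm_eq0/eqP.
rewrite eq_le sqnorm_ge0 andbT; apply/ler_addgt0Pr => e e_gt0; rewrite add0r.
have e4_gt0 : 0 < e / 4%:R by rewrite divr_gt0.
have [N1 uN1] := up _ e4_gt0; have [N2 uN2] := uq _ e4_gt0.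
have := sqnormD_le (p - u (maxn N1 N2)) (u (maxn N1 N2) - q).
rewrite addrA subrK [sqnorm (p - u _)]sqnormB.
by have := uN1 _ (leq_maxl N1 N2); have := uN2 _ (leq_maxr N1 N2); lra.
Qed.

Lemma sqconverges_ip_eq0 u v y :
  sqconverges u v -> (forall m, ip (u m) y = 0) -> ip v y = 0.
Proof.
move=> uv uy0.
have c2_ge0 : 0 <= `|ip v y| ^+ 2 by rewrite exprn_ge0.
have c2E := ge0_complexE c2_ge0; set r := complex.Re _ in c2E.
have r_le m : r <= sqnorm (u m - v) * sqnorm y.
  rewrite -lecR -c2E sqnormB.
  by have := cauchy_schwarz (v - u m) y; rewrite ipBl uy0 subr0.
suff r0 : r = 0 by move: c2E; rewrite r0 => /eqP; rewrite sqrf_eq0 normr_eq0 => /eqP.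
apply/eqP; rewrite eq_le -ler0c -c2E c2_ge0 andbT.
apply/ler_addgt0Pr => e e_gt0; rewrite add0r.
have Y_ge0 := sqnorm_ge0 y; set d := e / (sqnorm y + 1).
have d_gt0 : 0 < d by rewrite divr_gt0 // ltr_wpDl.
have dE : d * sqnorm y + d = e.
  by rewrite -[X in _ + X]mulr1 -mulrDr mulfVK // gt_eqF // ltr_wpDl.
have [N uN] := uv d d_gt0.
have := ler_wpM2r Y_ge0 (ltW (uN N (leqnn N))).
by have := r_le N; have := sqnorm_ge0 (u N - v); lra.
Qed.

Hypothesis complete : forall u, hcauchy ip u -> exists x, hconverges ip u x.

Section Isometry.
Variables T Ts : H -> H.
Hypothesis T_linear : is_linear T.
Hypothesis T_adjoint : is_adjoint ip T Ts.
Hypothesis T_isometry : forall x, Ts (T x) = x.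

Lemma adjoint_linear : is_linear Ts.
Proof.
move=> a x y; apply: ip_ext => w.
by rewrite -T_adjoint ipDr ipZr !T_adjoint ipDr ipZr.
Qed.

Lemma iter_adjoint k x y : ip (iter k T x) y = ip x (iter k Ts y).
Proof. by elim: k x y => [//|k IHk] x y; rewrite iterS T_adjoint IHk iterSr. Qed.

Lemma iter_isometry k x : iter k Ts (iter k T x) = x.
Proof. by elim: k x => [//|k IHk] x; rewrite iterS iterSr IHk T_isometry. Qed.

(* [proj k] is the orthogonal projection onto the range of [T ^ k]. *)
Definition proj k x := iter k T (iter k Ts x).

Lemma proj_linear k : is_linear (proj k).
Proof.
move=> a x y.
by rewrite /proj (is_linear_iter adjoint_linear k) (is_linear_iter T_linear k).
Qed.

Lemma ip_projl k x y : ip (proj k x) y = ip (iter k Ts x) (iter k Ts y).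
Proof. exact: iter_adjoint. Qed.

Lemma ip_projr k x y : ip x (proj k y) = ip (iter k Ts x) (iter k Ts y).
Proof. by rewrite ipC ip_projl -ipC. Qed.

Lemma proj_iter k w : proj k (iter k T w) = iter k T w.
Proof. by rewrite /proj iter_isometry. Qed.

Lemma proj_proj k m x : (k <= m)%N -> proj k (proj m x) = proj m x.
Proof.
move=> km; suff -> : proj m x = iter k T (iter (m - k) T (iter m Ts x)) by apply: proj_iter.
by rewrite /proj -iterD subnKC.
Qed.

Lemma iter_adjoint_proj k x : iter k Ts (proj k x) = iter k Ts x.
Proof. exact: iter_isometry. Qed.

Lemma sqnorm_proj k x : sqnorm (proj k x) = sqnorm (iter k Ts x).
Proof. by rewrite /sqnorm ip_projl iter_adjoint_proj. Qed.

Lemma sqnorm_projB k m x : (k <= m)%N ->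
  sqnorm (proj k x - proj m x) = sqnorm (iter k Ts x) - sqnorm (iter m Ts x).
Proof.
move=> km.
have cross : ip (proj k x) (proj m x) = ip (iter m Ts x) (iter m Ts x).
  by rewrite ip_projl -ip_projr proj_proj // ip_projr.
have cross' : ip (proj m x) (proj k x) = ip (iter m Ts x) (iter m Ts x).
  by rewrite ipC cross conj_Creal // ger0_real.
rewrite /sqnorm !ipBl !ipBr cross cross' !ip_projl !iter_adjoint_proj !ip_sqnorm.
by rewrite subrr subr0 -rmorphB.
Qed.

Lemma sqnorm_iter_adjoint_le x k m :
  (k <= m)%N -> sqnorm (iter m Ts x) <= sqnorm (iter k Ts x).
Proof. by move=> km; rewrite -subr_ge0 -sqnorm_projB // sqnorm_ge0. Qed.

Lemma sqnorm_proj_le k x : sqnorm (proj k x) <= sqnorm x.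
Proof. by rewrite sqnorm_proj; apply: (sqnorm_iter_adjoint_le x (leq0n k)). Qed.

Lemma proj_sqcauchy x : sqcauchy (proj^~ x).
Proof.
move=> e e_gt0.
have [N aN] := nonincreasing_cauchy (fun k m => sqnorm_iter_adjoint_le x (m:=m) (k:=k))
  (fun k => sqnorm_ge0 (iter k Ts x)) e_gt0.
exists N; suff wlog_mk m k : (N <= m)%N -> (m <= k)%N -> sqnorm (proj m x - proj k x) < e.
  move=> m k Nm Nk; case: (leqP m k) => [|/ltnW km]; first exact: wlog_mk.
  by rewrite sqnormB; apply: wlog_mk.
move=> Nm mk; rewrite sqnorm_projB //.
by have := aN k (leq_trans Nm mk); have := sqnorm_iter_adjoint_le x Nm; lra.
Qed.

Lemma proj_sqconverges j u q :
  sqconverges u q -> sqconverges (fun m => proj j (u m)) (proj j q).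
Proof.
move=> uq e /uq[N uN]; exists N => m /uN; apply: le_lt_trans.
by rewrite -(is_linearB (proj_linear j)) sqnorm_proj_le.
Qed.

Lemma reduces_proj L k w : reduces L T Ts -> L w -> L (proj k w).
Proof.
move=> [LT LTs] Lw.
have iterL S : (forall x, L x -> L (S x)) -> forall j y, L y -> L (iter j S y).
  by move=> LS; elim=> //= j IHj y /IHj /LS.
by apply: (iterL T) => //; apply: (iterL Ts).
Qed.

(* [proj_fixed L] is the intersection of [L] with H^uni(T). *)
Definition proj_fixed (L : H -> Prop) u := L u /\ forall j, proj j u = u.

Lemma proj_fixed_closed L : closed_subspace ip L -> closed_subspace ip (proj_fixed L).
Proof.
move=> [L0 Llin Lcl]; split.
- by split=> // j; apply: is_linear0 (proj_linear j).
- move=> a u v [Lu uP] [Lv vP]; split; first exact: Llin.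
  by move=> j; rewrite proj_linear uP vP.
- move=> u v Mu /hconvergesE uv; split.
    by apply: (Lcl u) => [m|]; [exact: (Mu m).1 | apply/hconvergesE].
  move=> j; apply: sqconverges_uniq (proj_sqconverges j uv) _.
  by move=> e /uv[N uN]; exists N => m; rewrite (Mu m).2; apply: uN.
Qed.

Lemma proj_fixed_invariant L u :
  reduces L T Ts -> proj_fixed L u -> proj_fixed L (T u).
Proof.
move=> [LT _] [Lu uP]; split=> [|[//|j]]; first exact: LT.
by rewrite /proj [iter j.+1 Ts _]iterSr T_isometry iterS; congr (T _); apply: uP.
Qed.

Lemma unitary_on_proj_fixed L : reduces L T Ts -> unitary_on T (proj_fixed L).
Proof.
move=> [_ LTs] y [Ly yP]; exists (Ts y); split; last exact: yP 1%N.
split=> [|j]; first exact: LTs.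
have -> : Ts y = iter j T (iter j.+1 Ts y) by rewrite -{1}(yP j.+1) /proj iterS T_isometry.
exact: proj_iter.
Qed.

Lemma Hiso_orthogonal_Huni x y : Hiso ip T Ts x -> Huni T y -> ip x y = 0.
Proof.
move=> x_iso y_uni; apply: (x_iso (fun u => ip u y = 0)).
  split; first exact: ip0l.
  - by move=> a u v uy vy; rewrite ipD uy vy mulr0 addr0.
  - by move=> u v uy /hconvergesE uv; apply: sqconverges_ip_eq0 uv uy.
move=> _ [k [w [w_ker ->]]]; have [v ->] := y_uni k.+1.
by rewrite iter_adjoint iterSr iter_isometry ipC T_adjoint w_ker ip0r conjC0.
Qed.

Lemma proj_limit_fixed L x : closed_subspace ip L -> reduces L T Ts -> L x ->
  exists2 q, sqconverges (proj^~ x) q & proj_fixed L q.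
Proof.
move=> [_ _ Lcl] Lred Lx.
have [q /hconvergesE xq] := complete (sqcauchy_hcauchy (proj_sqcauchy x)).
exists q => //; split.
  by apply: (Lcl _ q (fun k => reduces_proj k Lred Lx)); apply/hconvergesE.
move=> j; apply: sqconverges_uniq (proj_sqconverges j xq) _.
move=> e /xq[N xN]; exists (maxn N j) => m Nj_m.
rewrite proj_proj ?(leq_trans (leq_maxr _ _) Nj_m) //.
exact/xN/(leq_trans (leq_maxl _ _) Nj_m).
Qed.

Lemma pure_proj_sqconverges0 L x : closed_subspace ip L -> reduces L T Ts ->
  pure_on ip T L -> L x -> sqconverges (proj^~ x) 0.
Proof.
move=> Lc Lred Lpure Lx; have [q xq qM] := proj_limit_fixed Lc Lred Lx.
suff <- : q = 0 by [].
apply: (Lpure (proj_fixed L)) qM.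
- exact: proj_fixed_closed.
- by move=> u [].
- by move=> u; apply: proj_fixed_invariant.
- exact: unitary_on_proj_fixed.
Qed.

Lemma pure_sub_Hiso L x : closed_subspace ip L -> reduces L T Ts ->
  pure_on ip T L -> L x -> Hiso ip T Ts x.
Proof.
move=> Lc Lred Lpure Lx M [M0 Mlin Mcl] M_wandering.
have M_defect k : M (x - proj k x).
  elim: k => [|k IHk]; first by rewrite /proj subrr.
  set w := iter k Ts x - T (Ts (iter k Ts x)).
  have -> : x - proj k.+1 x = 1 *: (x - proj k x) + iter k T w.
    rewrite scale1r (is_linearB (is_linear_iter T_linear k)) /proj.
    by rewrite iterSr iterS addrA subrK.
  apply: Mlin IHk (M_wandering _ _); exists k, w; split=> //.
  by rewrite (is_linearB adjoint_linear) T_isometry subrr.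
apply: (Mcl _ _ M_defect); apply/hconvergesE => e.
move=> /(pure_proj_sqconverges0 Lc Lred Lpure Lx)[N xN].
by exists N => m /xN; rewrite subr0 sqnormB subKr.
Qed.

Lemma unitary_sub_Huni L y : unitary_on T L -> L y -> Huni T y.
Proof.
move=> T_onto Ly.
suff iterL : forall k, exists2 w, L w & y = iter k T w.
  by move=> k; have [w _ ->] := iterL k; exists w.
elim=> [|k [w Lw ->]]; first by exists y.
by have [v [Lv <-]] := T_onto w Lw; exists v; rewrite // iterSr.
Qed.

End Isometry.

Section IsometryTuple.
Variables (n : nat) (V Vs : 'I_n -> H -> H).
Hypothesis V_linear : forall i, is_linear (V i).
Hypothesis V_adjoint : forall i, is_adjoint ip (V i) (Vs i).
Hypothesis V_isometry : forall i x, Vs i (V i x) = x.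

Lemma typeA_sub_HA A L x : typeA ip V Vs A L -> L x -> HA ip V Vs A x.
Proof.
move=> [Lc Lred Lpure Lunitary] Lx; split=> i iA.
  exact: (pure_sub_Hiso (V_linear i) (V_adjoint i) (V_isometry i)
    Lc (Lred i) (Lpure i iA) Lx).
exact: unitary_sub_Huni (Lunitary i iA) Lx.
Qed.

Lemma HA_orthogonal A B x y : A != B -> HA ip V Vs A x -> HA ip V Vs B y -> ip x y = 0.
Proof.
move=> AB [x_iso x_uni] [y_iso y_uni]; have [j] := set_neq_witness AB.
case jA: (j \in A); case jB: (j \in B) => //= _.
  exact: (Hiso_orthogonal_Huni (V_adjoint j) (V_isometry j)
    (x_iso j jA) (y_uni j (negbT jB))).
apply: ipC_eq0.
exact: (Hiso_orthogonal_Huni (V_adjoint j) (V_isometry j)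
  (y_iso j jB) (x_uni j (negbT jA))).
Qed.

Lemma typeA_orthogonal (A B : {set 'I_n}) (LA LB : H -> Prop) :
  A != B -> typeA ip V Vs A LA -> typeA ip V Vs B LB ->
  forall x y, LA x -> LB y -> ip x y = 0.
Proof.
move=> AB LA_typeA LB_typeA x y LAx LBy.
exact: HA_orthogonal AB (typeA_sub_HA LA_typeA LAx) (typeA_sub_HA LB_typeA LBy).
Qed.

Lemma typeA_eq_HA (L : {set 'I_n} -> H -> Prop) :
  (forall A, typeA ip V Vs A (L A)) ->
  (forall x, exists f : {set 'I_n} -> H, (forall A, L A (f A)) /\ x = \sum_A f A) ->
  forall A x, L A x <-> HA ip V Vs A x.
Proof.
move=> L_typeA L_span A x; split; first exact: typeA_sub_HA.
have [f [Lf ->]] := L_span x => x_HA.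
have f_HA B : HA ip V Vs B (f B) := typeA_sub_HA (L_typeA B) (Lf B).
have f0 B : B != A -> f B = 0.
  move=> BA; apply: ip_eq0.
  have : ip (\sum_C f C) (f B) = 0 by apply: HA_orthogonal x_HA (f_HA B); rewrite eq_sym.
  rewrite ip_suml (bigD1 B) //= big1 ?addr0 // => C CB.
  exact: HA_orthogonal CB (f_HA C) (f_HA B).
by rewrite (bigD1 A) //= big1 ?addr0 // => B /f0.
Qed.

End IsometryTuple.
End InnerProduct.

Theorem proposition3p5 (R : realType) (H : lmodType R[i]) (ip : H -> H -> R[i])
  (n : nat) (z : 'I_n -> 'I_n -> R[i]) (V Vs : 'I_n -> H -> H) :
  is_hilbert ip ->
  doubly_noncommuting ip z V Vs ->
  (forall (A B : {set 'I_n}) (LA LB : H -> Prop),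
      A != B -> typeA ip V Vs A LA -> typeA ip V Vs B LB ->
      forall x y, LA x -> LB y -> ip x y = 0)
  /\
  (forall L : {set 'I_n} -> H -> Prop,
      (forall A, typeA ip V Vs A (L A)) ->
      (forall x : H, exists f : {set 'I_n} -> H,
          (forall A, L A (f A)) /\ x = \sum_(A : {set 'I_n}) f A) ->
      (forall f : {set 'I_n} -> H, (forall A, L A (f A)) ->
          \sum_(A : {set 'I_n}) f A = 0 -> forall A, f A = 0) ->
      forall A x, L A x <-> HA ip V Vs A x).
Proof.
move=> [ipD ipC ip_ge0 ip_eq0 complete] [_ V_linear V_adjoint V_isometry _].
split=> [|L L_typeA L_span _].
  exact: typeA_orthogonal.
exact: typeA_eq_HA.
Qed.
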